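(* Let $n\ge2$, let $V$ be a finite-dimensional complex vector space and let $\rho\colon P_{n+1}\to\mathrm{GL}(V)$ be a representation, where $P_{n+1}$ is identified with $F_n\rtimes P_n$ as described in the context. Fix $t_1,\dots,t_n\in\mathbf{C}^*$. Then (i) there is a representation $\rho_{t_1,\dots,t_n}\colon P_{n+1}\to\mathrm{GL}(V)$ with $\rho_{t_1,\dots,t_n}(g_i)=t_i\rho(g_i)$ for $i=1,\dots,n$ and $\rho_{t_1,\dots,t_n}(\beta)=\rho(\beta)$ for all $\beta\in P_n$; and (ii) for every $\beta\in P_n$ all entries of $\phi(\beta)$ lie in $\mathbf{Z}[F_n\rtimes P_n]$, and the map $\rho^+_{t_1,\dots,t_n}\colon P_n\to\mathrm{GL}(V^{\oplus n})$ sending $\beta$ to the block matrix whose $(k,l)$ block is $\rho_{t_1,\dots,t_n}(\phi(\beta)_{kl})$ (with $\rho_{t_1,\dots,t_n}$ extended linearly to the group ring) is a representation of $P_n$. This gives an $n$-parameter family of representations of $P_n$ on $V^{\oplus n}$.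
   Context: The braid group $B_n$ has generators $\sigma_1,\dots,\sigma_{n-1}$ with relations $\sigma_i\sigma_j=\sigma_j\sigma_i$ for $|i-j|>1$ and $\sigma_i\sigma_j\sigma_i=\sigma_j\sigma_i\sigma_j$ for $|i-j|=1$; $P_n\subset B_n$ is the pure braid group. Let $F_n$ be the free group on $g_1,\dots,g_n$. The semidirect product $F_n\rtimes B_n$ is the group generated by $F_n$ and $B_n$ subject to the additional relations $g_{i+1}\sigma_i=\sigma_i g_i$, $g_i\sigma_i=\sigma_i g_i g_{i+1}g_i^{-1}$, and $g_j\sigma_i=\sigma_i g_j$ for $j\notin\{i,i+1\}$; $F_n\rtimes P_n$ denotes its subgroup generated by $F_n$ and $P_n$. For $i=1,\dots,n-1$ let $R_i=\begin{bmatrix}0&g_i\\1&1-g_i\end{bmatrix}$, and let $\phi$ be the homomorphism from $B_n$ to the invertible $n\times n$ matrices over the group ring $\mathbf{Z}[F_n\rtimes B_n]$ given by $\phi(\sigma_i)=\sigma_i\cdot\mathrm{diag}(I_{i-1},R_i,I_{n-i-1})$ (the scalar $\sigma_i$ multiplies each entry on the left). The pure braid group $P_{n+1}$ is identified with $F_n\rtimes P_n$: $P_n\subset P_{n+1}$ as pure braids on the first $n$ strands, and $F_n$ corresponds to the subgroup of $P_{n+1}$ of braids whose first $n$ strands are straight, freely generated by $g_i=(\sigma_n\cdots\sigma_{i+1})\sigma_i^2(\sigma_n\cdots\sigma_{i+1})^{-1}$, $i=1,\dots,n$. *)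

From HB Require Import structures.
From mathcomp Require Import all_boot all_order all_algebra.
From mathcomp Require Import boolp reals complex.
Unset Implicit Arguments.
Import Order.TTheory GRing.Theory Num.Theory.

(* Letters of words in the generators of F_n ⋊ B_n (1-based indices as in
   the paper).  [Sg i b] is sigma_i (b = false) or sigma_i^{-1} (b = true);
   [Gn i b] is g_i or g_i^{-1}. *)
Inductive letter := Sg of nat & bool | Gn of nat & bool.
Definition word := seq letter.

Definition linv (x : letter) : letter :=
  match x with Sg i b => Sg i (~~ b) | Gn i b => Gn i (~~ b) end.

Definition is_sigma (x : letter) : bool := if x is Sg _ _ then true else false.

Definition wf_letter (n : nat) (x : letter) : bool :=
  match x with Sg i _ => (1 <= i <= n.-1)%N | Gn i _ => (1 <= i <= n)%N end.
Definition wf (n : nat) (w : word) : bool := all (wf_letter n) w.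
Definition braid_word (n : nat) (w : word) : bool :=
  wf n w && all is_sigma w.

Definition swap (i k : nat) : nat :=
  if k == i then i.+1 else if k == i.+1 then i else k.
Definition perm_of (w : word) (k : nat) : nat :=
  foldr (fun x k => match x with Sg i _ => swap i k | Gn _ _ => k end) k w.
(* the word represents an element of F_n ⋊ P_n (resp. of P_n for braid words) *)
Definition pure (n : nat) (w : word) : bool :=
  all (fun k => perm_of w k == k) (iota 1 n).

Notation s_ i := (Sg i false).
Notation g_ i := (Gn i false).
Notation ginv_ i := (Gn i true).

Inductive braid_rel (n : nat) : word -> word -> Prop :=
| br_far i j : (1 <= i <= n.-1)%N -> (1 <= j <= n.-1)%N ->
    ((i.+1 < j) || (j.+1 < i))%N -> braid_rel n [:: s_ i; s_ j] [:: s_ j; s_ i]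
| br_adj i j : (1 <= i <= n.-1)%N -> (1 <= j <= n.-1)%N ->
    ((j == i.+1) || (i == j.+1)) ->
    braid_rel n [:: s_ i; s_ j; s_ i] [:: s_ j; s_ i; s_ j].

Inductive sd_rel (n : nat) : word -> word -> Prop :=
| sd_braid u v : braid_rel n u v -> sd_rel n u v
| sd_1 i : (1 <= i <= n.-1)%N -> sd_rel n [:: g_ i.+1; s_ i] [:: s_ i; g_ i]
| sd_2 i : (1 <= i <= n.-1)%N ->
    sd_rel n [:: g_ i; s_ i] [:: s_ i; g_ i; g_ i.+1; ginv_ i]
| sd_3 i j : (1 <= i <= n.-1)%N -> (1 <= j <= n)%N -> j != i -> j != i.+1 ->
    sd_rel n [:: g_ j; s_ i] [:: s_ i; g_ j].

(* the congruence on words generated by free cancellation of allowed letters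
   and the relations R: u ~ v iff u and v represent the same group element *)
Inductive cong (ok : letter -> bool) (R : word -> word -> Prop) :
  word -> word -> Prop :=
| cg_refl u : cong ok R u u
| cg_sym u v : cong ok R u v -> cong ok R v u
| cg_trans u v w : cong ok R u v -> cong ok R v w -> cong ok R u w
| cg_rel a b u v : R u v -> cong ok R (a ++ u ++ b) (a ++ v ++ b)
| cg_free a b x : ok x -> cong ok R (a ++ [:: x; linv x] ++ b) (a ++ b).

Definition eqG (n : nat) := cong (wf_letter n) (sd_rel n).
Definition eqB (n : nat) := cong (fun x => wf_letter n x && is_sigma x) (braid_rel n).

(* A representation of F_n ⋊ P_n (= P_{n+1}) on V = C^d, given on words. *)
Definition is_rep_FP (C : nzRingType) (n d : nat) (f : word -> 'M[C]_d) : Prop :=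
  f [::] = (1%:M)%R /\
  (forall u v, wf n u -> wf n v -> pure n u -> pure n v ->
      f (u ++ v) = (f u *m f v)%R) /\
  (forall u v, wf n u -> wf n v -> pure n u -> pure n v ->
      eqG n u v -> f u = f v).

Definition is_rep_P (C : nzRingType) (n m : nat) (f : word -> 'M[C]_m) : Prop :=
  f [::] = (1%:M)%R /\
  (forall u v, braid_word n u -> braid_word n v -> pure n u -> pure n v ->
      f (u ++ v) = (f u *m f v)%R) /\
  (forall u v, braid_word n u -> braid_word n v -> pure n u -> pure n v ->
      eqB n u v -> f u = f v).

(* Elements of the group ring Z[F_n ⋊ B_n]: formal Z-combinations of words. *)
Definition gr := seq (int * word).
Definition gmul (x y : gr) : gr :=
  [seq ((p.1 * q.1)%R, p.2 ++ q.2) | p <- x, q <- y].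
(* n x n matrices over the group ring, indices 0-based *)
Definition gmat (n : nat) := 'I_n -> 'I_n -> gr.
Definition gone (n : nat) : gmat n :=
  fun k l => if k == l then [:: (1%R, [::])] else [::].
Definition gmm (n : nat) (A B : gmat n) : gmat n :=
  fun k l => flatten [seq gmul (A k m) (B m l) | m <- enum 'I_n].

(* diag(I_{i-1}, R_i, I_{n-i-1}) (inv = false) and its inverse (inv = true),
   R_i = [[0, g_i], [1, 1 - g_i]],  R_i^{-1} = [[1 - g_i^{-1}, 1], [g_i^{-1}, 0]] *)
Definition Dmat (n i : nat) (inv : bool) : gmat n :=
  fun k l =>
    let k' := k.+1 in let l' := l.+1 in
    if (k' \in [:: i; i.+1]) && (l' \in [:: i; i.+1]) then
      if ~~ inv then
        if (k' == i) && (l' == i) then [::]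
        else if (k' == i) then [:: (1%R, [:: g_ i])]
        else if (l' == i) then [:: (1%R, [::])]
        else [:: (1%R, [::]); ((-1)%R, [:: g_ i])]
      else
        if (k' == i) && (l' == i) then [:: (1%R, [::]); ((-1)%R, [:: ginv_ i])]
        else if (k' == i) then [:: (1%R, [::])]
        else if (l' == i) then [:: (1%R, [:: ginv_ i])]
        else [::]
    else gone n k l.

(* phi(sigma_i) = sigma_i . D_i,  phi(sigma_i^{-1}) = phi(sigma_i)^{-1} = D_i^{-1} . sigma_i^{-1} *)
Definition phi_letter (n : nat) (x : letter) : gmat n :=
  match x with
  | Sg i false => fun k l => [seq (p.1, s_ i :: p.2) | p <- Dmat n i false k l]
  | Sg i true => fun k l => [seq (p.1, p.2 ++ [:: Sg i true]) | p <- Dmat n i true k l]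
  | Gn _ _ => gone n
  end.
Definition phi (n : nat) (w : word) : gmat n :=
  foldr (fun x M => gmm n (phi_letter n x) M) (gone n) w.

(* x lies in Z[F_n ⋊ P_n]: its coefficient on every group element outside
   F_n ⋊ P_n vanishes *)
Definition in_ZFP (n : nat) (x : gr) : Prop :=
  forall u, wf n u -> ~~ pure n u ->
    (\sum_(p <- x | `[< eqG n p.2 u >]) p.1)%R = 0%R.

Definition ext (C : nzRingType) (n d : nat) (f : word -> 'M[C]_d) (x : gr) : 'M[C]_d :=
  (\sum_(p <- x | pure n p.2) p.1%:~R *: f p.2)%R.

Definition rho_plus (C : nzRingType) (n d : nat) (rho_t : word -> 'M[C]_d) (b : word)
  : 'M[C]_(\sum_(k < n) d) :=
  @mxblock C n n (fun _ => d) (fun _ => d) (fun k l => ext C n d rho_t (phi n b k l)).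

Definition twisted (C : nzRingType) (n d : nat) (rho : word -> 'M[C]_d) (t : nat -> C)
  (rho_t : word -> 'M[C]_d) : Prop :=
  is_rep_FP C n d rho_t /\
  (forall i, (1 <= i <= n)%N -> rho_t [:: g_ i] = (t i *: rho [:: g_ i])%R) /\
  (forall b, braid_word n b -> pure n b -> rho_t b = rho b).

Arguments is_rep_FP {C} n d f.
Arguments is_rep_P {C} n m f.
Arguments ext {C} n d f x.
Arguments rho_plus {C} n d rho_t b.
Arguments twisted {C} n d rho t rho_t.

(* Relations g_{i+1} s_i = s_i g_i and g_i s_i = s_i g_i g_{i+1} g_i^{-1} say that
   conjugation by braids permutes the generators g_j up to conjugacy in F_n.  Hence
   g_j |-> t_j extends to a character chi of F_n ⋊ P_n (pure braids fix all indices),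
   and rho_t := chi rho is a representation.  The entries of phi(beta) are
   Z-combinations of words obtained from beta by inserting letters g_i^{+-1} next to
   its letters s_i^{+-1}; they induce the same permutation as beta, so they lie in
   Z[F_n ⋊ P_n] when beta is pure.  Finally phi is multiplicative on words, and it
   respects the braid relations and s_i s_i^{-1} = 1 up to equality in Z[F_n ⋊ B_n],
   which we test against all functions on F_n ⋊ B_n.  Extending rho_t to such a
   function, the block matrices rho^+ inherit multiplicativity and the braid
   relations. *)

From HB Require Import structures.
From mathcomp Require Import all_boot all_order all_algebra.
From mathcomp Require Import boolp reals complex.
From mathcomp Require Import zify ring.
Import Order.TTheory GRing.Theory Num.Theory.
Set Implicit Arguments. Unset Strict Implicit. Unset Printing Implicit Defensive.

Definition eqletter (x y : letter) : bool :=
  match x, y with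
  | Sg i b, Sg j c | Gn i b, Gn j c => (i == j) && (b == c)
  | _, _ => false
  end.

Lemma eqletterP : Equality.axiom eqletter.
Proof.
case=> [i b|i b] [j c|j c] /=; try by constructor.
all: by apply: (iffP andP) => [[/eqP-> /eqP->]|[-> ->]].
Qed.

HB.instance Definition _ := hasDecEq.Build letter eqletterP.

Arguments cg_refl {ok R} u.
Arguments cg_sym {ok R u v}.
Arguments cg_trans {ok R u v w}.

Section Congruence.
Variables (ok : letter -> bool) (R : word -> word -> Prop).

Lemma cong_ctx a b u v : cong ok R u v -> cong ok R (a ++ u ++ b) (a ++ v ++ b).
Proof.
elim=> {u v} [u|u v _ IH|u v w _ IH1 _ IH2|a' b' u v Ruv|a' b' x okx].
- exact: cg_refl.
- exact: cg_sym IH.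
- exact: cg_trans IH1 IH2.
- by rewrite -!catA !(catA a a'); apply: cg_rel.
- by rewrite -!catA !(catA a a'); apply: cg_free.
Qed.

Lemma cong_catl a u v : cong ok R u v -> cong ok R (a ++ u) (a ++ v).
Proof. by move=> /(cong_ctx a [::]); rewrite !cats0. Qed.

Lemma cong_catr b u v : cong ok R u v -> cong ok R (u ++ b) (v ++ b).
Proof. exact: cong_ctx [::] b u v. Qed.

Lemma cong_inv (T : Type) (f : word -> T) :
  (forall a b u v, R u v -> f (a ++ u ++ b) = f (a ++ v ++ b)) ->
  (forall a b x, ok x -> f (a ++ [:: x; linv x] ++ b) = f (a ++ b)) ->
  forall u v, cong ok R u v -> f u = f v.
Proof. by move=> hR hfree u v; elim=> // u1 u2 u3 _ -> _ ->. Qed.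

End Congruence.

Lemma perm_of_cat u v k : perm_of (u ++ v) k = perm_of u (perm_of v k).
Proof. by rewrite /perm_of foldr_cat. Qed.

Ltac noeq t := match t with context[_ == _] => fail 1 | _ => idtac end.
Ltac case_swap :=
  rewrite /swap;
  repeat (match goal with |- context[?x == ?y] =>
            noeq x; noeq y; case: (x =P y) => ? end; simpl);
  lia.

Lemma swapK i : involutive (swap i).
Proof. move=> k; case_swap. Qed.

Lemma swap_far i j k : (i.+1 < j)%N || (j.+1 < i)%N ->
  swap i (swap j k) = swap j (swap i k).
Proof. move=> ?; case_swap. Qed.

Lemma swap_adj i j k : (j == i.+1) || (i == j.+1) ->
  swap i (swap j (swap i k)) = swap j (swap i (swap j k)).
Proof. move=> ?; case_swap. Qed.

Lemma perm_of_free x k : perm_of [:: x; linv x] k = k.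
Proof. by case: x => //= i b; rewrite swapK. Qed.

Lemma sd_rel_perm n u v : sd_rel n u v -> perm_of u =1 perm_of v.
Proof.
case=> // _ _ [] i j _ _ hij k /=; first exact: swap_far.
exact: swap_adj.
Qed.

Lemma eqG_perm n u v : eqG n u v -> perm_of u =1 perm_of v.
Proof.
move=> huv k; apply: (cong_inv (f := fun w => perm_of w k)) huv.
- by move=> a b u' v' /sd_rel_perm e; rewrite !perm_of_cat e.
- by move=> a b x _; rewrite !perm_of_cat perm_of_free.
Qed.

Section WellFormed.
Variable n : nat.

Lemma wf_cat u v : wf n (u ++ v) = wf n u && wf n v.
Proof. exact: all_cat. Qed.

Lemma sd_rel_wf u v : sd_rel n u v -> wf n u /\ wf n v.
Proof.
case=> [_ _ [] i j /= -> -> _ //|i hi|i hi|i j hi hj _ _]; rewrite /wf /= ?hi ?hj;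
  split=> //; lia.
Qed.

Lemma eqG_wf u v : eqG n u v -> wf n u = wf n v.
Proof.
apply: cong_inv => [a b u' v' /sd_rel_wf [hu hv]|a b x hx].
  by rewrite !wf_cat hu hv.
have hx' : wf_letter n (linv x) by case: x hx.
by rewrite !wf_cat /wf /= hx hx'.
Qed.

Lemma wf_perm_out u k : wf n u -> ~~ (1 <= k <= n)%N -> perm_of u k = k.
Proof.
elim: u => // [[i b|i b]] u IH /= /andP[hx hu] hk; rewrite IH // /swap.
case: eqP => [?|_]; first lia.
case: eqP => // ?; lia.
Qed.

Lemma pure_perm u : wf n u -> pure n u -> perm_of u =1 id.
Proof.
move=> hu /allP hp k; case hk : (1 <= k <= n)%N.
  by apply/eqP/hp; rewrite mem_iota; lia.
by rewrite wf_perm_out // hk.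
Qed.

Lemma eq_pure u v : perm_of u =1 perm_of v -> pure n u = pure n v.
Proof. by move=> e; apply: eq_all => k; rewrite e. Qed.

Lemma pure_nil : pure n [::].
Proof. exact/allP. Qed.

Lemma pure_cat u v : pure n u -> pure n v -> pure n (u ++ v).
Proof.
move=> /allP pu /allP pv; apply/allP => k hk.
by rewrite perm_of_cat (eqP (pv k hk)) pu.
Qed.

End WellFormed.

Local Open Scope ring_scope.

Section Twist.
Variables (C : fieldType) (n : nat) (t : nat -> C).
Hypothesis t_neq0 : forall i, (1 <= i <= n)%N -> t i != 0.

Definition tw (k : nat) : C := if (1 <= k <= n)%N then t k else 1.

Lemma tw_neq0 k : tw k != 0.
Proof. by rewrite /tw; case: ifP => [/t_neq0|]; rewrite ?oner_eq0. Qed.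

(* [chi id] is the character of F_n ⋊ P_n; the argument [pi] records how the
   braid letters read so far relabel the generators g_j. *)
Fixpoint chi (pi : nat -> nat) (w : word) : C :=
  match w with
  | [::] => 1
  | Sg i _ :: w => chi (fun k => pi (swap i k)) w
  | Gn j b :: w => (if b then (tw (pi j))^-1 else tw (pi j)) * chi pi w
  end.

Lemma eq_chi w pi pi' : pi =1 pi' -> chi pi w = chi pi' w.
Proof.
elim: w pi pi' => //= [[i b|j b]] w IH pi pi' e; last by rewrite e (IH pi pi').
by apply: IH => k; rewrite e.
Qed.

Lemma chi_cat u v pi : chi pi (u ++ v) = chi pi u * chi (fun k => pi (perm_of u k)) v.
Proof.
elim: u pi => /= [|[i b|j b] u IH] pi; first by rewrite mul1r; apply: eq_chi.
  exact: IH.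
by rewrite IH mulrA.
Qed.

Lemma chi_braid pi w : all is_sigma w -> chi pi w = 1.
Proof. by elim: w pi => //= [[i b|j b]] w IH pi //= /IH. Qed.

Lemma sd_rel_chi u v pi : sd_rel n u v -> chi pi u = chi pi v.
Proof.
case=> [_ _ []|i _|i _|i j _ _ hji hji1] //=; rewrite /swap ?eqxx //.
  rewrite ifN ?eqn_leq ?ltnn // !mulr1.
  by rewrite mulrCA mulfV ?tw_neq0 ?mulr1.
by rewrite (negbTE hji) (negbTE hji1).
Qed.

Lemma eqG_chi u v pi : eqG n u v -> chi pi u = chi pi v.
Proof.
apply: cong_inv => [a b u' v' huv|a b [i c|j c] _]; rewrite !chi_cat.
- rewrite (sd_rel_chi _ huv); congr (_ * (_ * _)).
  by apply: eq_chi => k; rewrite (sd_rel_perm huv).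
- by rewrite /= mul1r; congr (_ * _); apply: eq_chi => k; rewrite swapK.
- by case: c; rewrite /= mulr1 ?mulVf ?mulfV ?mul1r ?tw_neq0.
Qed.

End Twist.

Definition rho_twist (C : fieldType) (n d : nat) (t : nat -> C)
  (rho : word -> 'M[C]_d) (w : word) : 'M[C]_d := chi n t id w *: rho w.

Lemma rho_twist_twisted (C : fieldType) (n d : nat) (rho : word -> 'M[C]_d)
  (t : nat -> C) :
  (forall i, (1 <= i <= n)%N -> t i != 0) -> is_rep_FP n d rho ->
  twisted n d rho t (rho_twist n t rho).
Proof.
move=> t_neq0 [rho1 [rhoM rho_eq]]; split; [split; [|split]|split].
- by rewrite /rho_twist /= scale1r rho1.
- move=> u v hu hv pu pv; rewrite /rho_twist chi_cat rhoM //.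
  rewrite (@eq_chi _ _ _ _ _ id); last by move=> k; rewrite /= (pure_perm hu pu).
  by rewrite mulrC -scalerA scalemxAl scalemxAr.
- by move=> u v hu hv pu pv huv; rewrite /rho_twist (eqG_chi t_neq0 _ huv) (rho_eq u v).
- by move=> i hi; rewrite /rho_twist /= mulr1 /tw hi.
- by move=> b /andP[_ hb] _; rewrite /rho_twist chi_braid // scale1r.
Qed.

Lemma mem_gone n (k l : 'I_n) p : p \in gone n k l -> p = (1, [::]).
Proof. by rewrite /gone; case: eqP => // _; rewrite inE => /eqP. Qed.

Lemma mem_Dmat n i b (k l : 'I_n) p :
  p \in Dmat n i b k l -> p.2 = [::] \/ p.2 = [:: Gn i b].
Proof.
rewrite /Dmat; case: ifP => _; last by move/mem_gone->; left.
case: b => /=; repeat case: ifP => _; rewrite ?inE //;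
  by repeat (case/orP || move/eqP ->); auto.
Qed.

Lemma mem_gmm n (A B : gmat n) k l p : p \in gmm n A B k l ->
  exists m q r, [/\ q \in A k m, r \in B m l & p = (q.1 * r.1, q.2 ++ r.2)].
Proof.
case/flattenP => s /mapP[m _ ->] /allpairsP[[q r] /= [hq hr ->]].
by exists m, q, r.
Qed.

Lemma mem_phi n w (k l : 'I_n) p : p \in phi n w k l ->
  perm_of p.2 =1 perm_of w /\ (wf n w -> wf n p.2).
Proof.
elim: w k l p => [|x w IH] k l p /=; first by move/mem_gone->.
case/mem_gmm => m [q [r [hq /IH [hr_perm hr_wf] ->]]] /=.
have [hq_perm hq_wf] : perm_of q.2 =1 perm_of [:: x] /\ (wf_letter n x -> wf n q.2).
  case: x hq => [i b|i b] /=; last by move/mem_gone->; split.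
  by case: b => /mapP[q' /mem_Dmat [] hq' ->]; rewrite /= hq';
    split=> // hi; rewrite /wf /= ?hi //; lia.
split; first by move=> j; rewrite !perm_of_cat hr_perm hq_perm.
by move=> /andP[/hq_wf hx /hr_wf hw]; rewrite wf_cat hx hw.
Qed.

Lemma phi_in_ZFP n b (k l : 'I_n) : pure n b -> in_ZFP n (phi n b k l).
Proof.
move=> hb u hu hnp; rewrite big_seq_cond big1 // => p /andP[hp /asboolP hpu].
case/negP: hnp; rewrite -(eq_pure n (eqG_perm hpu)).
by case: (mem_phi hp) => /(eq_pure n) ->.
Qed.

Section GroupRingEval.
Variable T : zmodType.

Definition gr_eval (F : word -> T) (x : gr) : T := \sum_(p <- x) F p.2 *~ p.1.

Lemma eq_gr_eval F G x : F =1 G -> gr_eval F x = gr_eval G x.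
Proof. by move=> e; apply: eq_bigr => p _; rewrite e. Qed.

Lemma gr_eval_map F f x :
  gr_eval F [seq (p.1, f p.2) | p <- x] = gr_eval (F \o f) x.
Proof. by rewrite /gr_eval big_map. Qed.

Lemma gr_eval_nil F : gr_eval F [::] = 0.
Proof. exact: big_nil. Qed.

Lemma gr_eval1 F w : gr_eval F [:: (1, w)] = F w.
Proof. by rewrite /gr_eval big_seq1. Qed.

Lemma gr_eval2 F w w' : gr_eval F [:: (1, w); (-1, w')] = F w - F w'.
Proof. by rewrite /gr_eval !big_cons big_nil addr0 mulrN1z. Qed.

Lemma gr_eval_sum (I : Type) (r : seq I) (G : I -> word -> T) x :
  gr_eval (fun w => \sum_(m <- r) G m w) x = \sum_(m <- r) gr_eval (G m) x.
Proof.
rewrite /gr_eval exchange_big; apply: eq_bigr => p _.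
by rewrite mulrz_suml.
Qed.

Lemma gr_eval_gmul F x y :
  gr_eval F (gmul x y) = gr_eval (fun u => gr_eval (fun v => F (u ++ v)) y) x.
Proof.
rewrite /gr_eval big_allpairs_dep; apply: eq_bigr => p _.
by rewrite mulrz_suml; apply: eq_bigr => q _; rewrite mulrzAC -mulrzA.
Qed.

Lemma gr_eval_gmm n (A B : gmat n) F k l :
  gr_eval F (gmm n A B k l) =
  \sum_(m < n) gr_eval (fun u => gr_eval (fun v => F (u ++ v)) (B m l)) (A k m).
Proof.
rewrite /gmm /gr_eval big_flatten big_map big_enum; apply: eq_bigr => m _.
exact: gr_eval_gmul.
Qed.

Lemma gr_eval_gone n F (k l : 'I_n) :
  gr_eval F (gone n k l) = if k == l then F [::] else 0.
Proof. by rewrite /gone; case: eqP => _; rewrite ?gr_eval1 ?gr_eval_nil. Qed.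

Lemma gr_eval_phi_cat n F u v k l :
  gr_eval F (phi n (u ++ v) k l) =
  \sum_(m < n) gr_eval (fun u' => gr_eval (fun v' => F (u' ++ v')) (phi n v m l))
                       (phi n u k m).
Proof.
elim: u F k l => [|x u IH] F k l /=.
  under eq_bigr do rewrite gr_eval_gone.
  by rewrite -big_mkcond (big_pred1 k) // => m; rewrite /= eq_sym.
rewrite gr_eval_gmm.
transitivity (\sum_(m < n) \sum_(m' < n) gr_eval (fun u' => gr_eval
  (fun w => gr_eval (fun v' => F (u' ++ w ++ v')) (phi n v m' l)) (phi n u m m'))
  (phi_letter n x k m)).
  by apply: eq_bigr => m _; rewrite -gr_eval_sum; apply: eq_gr_eval => w; rewrite IH.
rewrite exchange_big /=; apply: eq_bigr => m' _.
rewrite gr_eval_gmm; apply: eq_bigr => m _.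
by do 3 (apply: eq_gr_eval => ?); rewrite catA.
Qed.
End GroupRingEval.

Lemma ord_eqF n (x y : 'I_n) : val x <> val y -> (x == y) = false.
Proof. by move=> h; apply/negbTE; rewrite -val_eqE; apply/eqP. Qed.

(* The rows and columns of D_i are indexed 0-based: [a] is row i, [b] row i+1. *)
Section DmatBlock.
Variables (n i : nat) (a b : 'I_n).
Hypotheses (ha : val a = i.-1) (hb : val b = i) (i_gt0 : (0 < i)%N).

Lemma ab_neq : (a == b) = false. Proof. by apply: ord_eqF; lia. Qed.
Lemma ba_neq : (b == a) = false. Proof. by apply: ord_eqF; lia. Qed.

Let is_a (x : 'I_n) : (x.+1 == i) = (x == a).
Proof. by rewrite -val_eqE /= ha; apply/eqP/eqP; lia. Qed.
Let is_b (x : 'I_n) : (x.+1 == i.+1) = (x == b).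
Proof. by rewrite -val_eqE /= hb; apply/eqP/eqP; lia. Qed.

Lemma DmatE (k m : 'I_n) : Dmat n i false k m =
  if k == a then (if m == b then [:: (1, [:: g_ i])] else [::])
  else if k == b then (if m == a then [:: (1, [::])]
       else if m == b then [:: (1, [::]); (-1, [:: g_ i])] else [::])
  else gone n k m.
Proof.
rewrite /Dmat /= !inE !is_a !is_b.
case: (eqVneq k a) => [->|ka]; [|case: (eqVneq k b) => [->|kb]];
  case: (eqVneq m a) => [->|ma]; try case: (eqVneq m b) => [->|mb];
  rewrite ?ab_neq ?ba_neq ?eqxx //= /gone eq_sym;
  by [rewrite (negbTE ma) | rewrite (negbTE mb)].
Qed.

Lemma DmatVE (k m : 'I_n) : Dmat n i true k m =
  if k == a then (if m == a then [:: (1, [::]); (-1, [:: ginv_ i])]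
       else if m == b then [:: (1, [::])] else [::])
  else if k == b then (if m == a then [:: (1, [:: ginv_ i])] else [::])
  else gone n k m.
Proof.
rewrite /Dmat /= !inE !is_a !is_b.
case: (eqVneq k a) => [->|ka]; [|case: (eqVneq k b) => [->|kb]];
  case: (eqVneq m a) => [->|ma]; try case: (eqVneq m b) => [->|mb];
  rewrite ?ab_neq ?ba_neq ?eqxx //= /gone eq_sym;
  by [rewrite (negbTE ma) | rewrite (negbTE mb)].
Qed.

Variable T : zmodType.

Let sum_if2 (X Y : 'I_n -> T) :
  \sum_(m < n) (if m == a then X m else if m == b then Y m else 0) = X a + Y b.
Proof.
rewrite (bigD1 a) //= eqxx (bigD1 b) /=; last by rewrite eq_sym ab_neq.
by rewrite ba_neq eqxx big1 ?addr0 // => m /andP[/negbTE -> /negbTE ->].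
Qed.

Let sum_if1 (c : 'I_n) (X : 'I_n -> T) :
  \sum_(m < n) (if c == m then X m else 0) = X c.
Proof. by rewrite -big_mkcond (big_pred1 c) // => m; rewrite /= eq_sym. Qed.

Let gr_eval_if (F : word -> T) (c : bool) x y :
  gr_eval F (if c then x else y) = if c then gr_eval F x else gr_eval F y.
Proof. by case: c. Qed.

Lemma gr_eval_phi_sigma (F : word -> T) (B : gmat n) k l :
  gr_eval F (gmm n (phi_letter n (s_ i)) B k l) =
  if k == a then gr_eval (fun w => F (s_ i :: g_ i :: w)) (B b l)
  else if k == b then gr_eval (fun w => F (s_ i :: w)) (B a l)
    + gr_eval (fun w => F (s_ i :: w)) (B b l)
    - gr_eval (fun w => F (s_ i :: g_ i :: w)) (B b l)
  else gr_eval (fun w => F (s_ i :: w)) (B k l).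
Proof.
rewrite gr_eval_gmm /=.
under eq_bigr => m _ do rewrite (gr_eval_map _ (cons (s_ i))) DmatE
  !gr_eval_if ?gr_eval_nil ?gr_eval1 ?gr_eval2.
case: (eqVneq k a) => [_|ka]; first by rewrite -big_mkcond big_pred1_eq.
case: (eqVneq k b) => [_|kb]; first by rewrite sum_if2 addrA.
exact: sum_if1.
Qed.

Lemma gr_eval_phi_sigmaV (F : word -> T) (B : gmat n) k l :
  gr_eval F (gmm n (phi_letter n (Sg i true)) B k l) =
  if k == a then gr_eval (fun w => F (Sg i true :: w)) (B a l)
    - gr_eval (fun w => F (ginv_ i :: Sg i true :: w)) (B a l)
    + gr_eval (fun w => F (Sg i true :: w)) (B b l)
  else if k == b then gr_eval (fun w => F (ginv_ i :: Sg i true :: w)) (B a l)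
  else gr_eval (fun w => F (Sg i true :: w)) (B k l).
Proof.
rewrite gr_eval_gmm /=.
under eq_bigr => m _ do rewrite (gr_eval_map _ (fun w => w ++ [:: Sg i true])) DmatVE
  !gr_eval_if ?gr_eval_nil ?gr_eval1 ?gr_eval2.
case: (eqVneq k a) => [_|ka]; first by rewrite sum_if2.
case: (eqVneq k b) => [_|kb]; first by rewrite -big_mkcond big_pred1_eq.
exact: sum_if1.
Qed.

End DmatBlock.

Lemma phi_nil n : phi n [::] = gone n. Proof. by []. Qed.

Lemma phi_cons n x w : phi n (x :: w) = gmm n (phi_letter n x) (phi n w).
Proof. by []. Qed.

Section PhiEquiv.
Variables (T : comNzRingType) (n : nat).

Definition eqG_invariant (F : word -> T) := forall u v, eqG n u v -> F u = F v.

(* [A] and [B] agree as matrices over Z[F_n ⋊ B_n]. *)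
Definition gmat_eqv (A B : gmat n) :=
  forall F, eqG_invariant F -> forall k l, gr_eval F (A k l) = gr_eval F (B k l).

Lemma gmat_eqv_sym A B : gmat_eqv A B -> gmat_eqv B A.
Proof. by move=> h F hF k l; rewrite h. Qed.

Lemma gmat_eqv_phi_ctx u v a b : gmat_eqv (phi n u) (phi n v) ->
  gmat_eqv (phi n (a ++ u ++ b)) (phi n (a ++ v ++ b)).
Proof.
move=> huv F hF k l; rewrite !gr_eval_phi_cat; apply: eq_bigr => m _.
apply: eq_gr_eval => w; rewrite !gr_eval_phi_cat; apply: eq_bigr => m' _.
apply: huv => u' v' e; apply: eq_gr_eval => w'; apply: hF.
exact/cong_catl/cong_catr.
Qed.

Lemma eqB_gmat_eqv :
  (forall u v, braid_rel n u v -> gmat_eqv (phi n u) (phi n v)) ->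
  (forall i b, (0 < i <= n.-1)%N ->
     gmat_eqv (phi n [:: Sg i b; Sg i (~~ b)]) (phi n [::])) ->
  forall u v, eqB n u v -> gmat_eqv (phi n u) (phi n v).
Proof.
move=> hrel hfree u v; elim=> {u v}.
- by [].
- by move=> u v _ /gmat_eqv_sym.
- by move=> u v w _ huv _ hvw F hF k l; rewrite huv // hvw.
- by move=> a b u v /hrel; apply: gmat_eqv_phi_ctx.
- move=> a b [i c /andP[hi _]|? ? /andP[]//].
  exact: gmat_eqv_phi_ctx (hfree i c hi).
Qed.

End PhiEquiv.

Section WordRewriting.
Variable n : nat.
Implicit Types (a b u v w : word) (x : letter).

Lemma eqG_sd a b u v w : sd_rel n u v -> eqG n (a ++ v ++ b) w -> eqG n (a ++ u ++ b) w.
Proof. by move=> h; apply: cg_trans; apply: cg_rel. Qed.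

Lemma eqG_sdV a b u v w : sd_rel n v u -> eqG n (a ++ v ++ b) w -> eqG n (a ++ u ++ b) w.
Proof. by move=> h; apply: cg_trans; apply/cg_sym/cg_rel. Qed.

Lemma eqG_braid a b u v w :
  braid_rel n u v -> eqG n (a ++ v ++ b) w -> eqG n (a ++ u ++ b) w.
Proof. by move=> h; apply/eqG_sd/sd_braid. Qed.

Lemma eqG_cancel a b x w :
  wf_letter n x -> eqG n (a ++ b) w -> eqG n (a ++ [:: x; linv x] ++ b) w.
Proof. by move=> h; apply: cg_trans; apply: cg_free. Qed.

Lemma eqG_insert a b x w :
  wf_letter n x -> eqG n (a ++ [:: x; linv x] ++ b) w -> eqG n (a ++ b) w.
Proof. by move=> h; apply: cg_trans; apply/cg_sym/cg_free. Qed.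

End WordRewriting.

Arguments eqG_sd {n} a b {u v w}.
Arguments eqG_sdV {n} a b {u v w}.
Arguments eqG_braid {n} a b {u v w}.
Arguments eqG_cancel {n} a b {x w}.
Arguments eqG_insert {n} a b x {w}.

Section AdjacentWords.
Variables (n i : nat).
Hypotheses (hi : (0 < i <= n.-1)%N) (hj : (0 < i.+1 <= n.-1)%N).
Let j := i.+1.
Let hj1 : (0 < j.+1 <= n)%N. Proof. rewrite /j; lia. Qed.
Let j1_neq_i : j.+1 != i. Proof. rewrite /j; apply/eqP; lia. Qed.
Let j1_neq_j : j.+1 != i.+1. Proof. rewrite /j; apply/eqP; lia. Qed.
Let wf_ginv_j : wf_letter n (ginv_ j). Proof. rewrite /= /j; lia. Qed.
Let ij_adj : (j == i.+1) || (i == j.+1). Proof. by rewrite /j eqxx. Qed.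

Lemma eqG_sisjsi : eqG n [:: s_ i; s_ j; s_ i] [:: s_ j; s_ i; s_ j].
Proof. exact: (eqG_braid [::] [::] (br_adj _ _ _ hi hj ij_adj) (cg_refl _)). Qed.

Lemma eqG_sisjgjsi : eqG n [:: s_ i; s_ j; g_ j; s_ i] [:: s_ j; g_ j; s_ i; s_ j].
Proof.
apply: (eqG_sdV [:: s_ i] [:: s_ i] (sd_1 _ _ hj)) => /=.
apply: (eqG_sdV [::] [:: s_ j; s_ i] (sd_3 _ _ _ hi hj1 j1_neq_i j1_neq_j)) => /=.
apply: (eqG_braid [:: g_ j.+1] [::] (br_adj _ _ _ hi hj ij_adj)) => /=.
exact: (eqG_sd [::] [:: s_ i; s_ j] (sd_1 _ _ hj) (cg_refl _)).
Qed.

Lemma eqG_sisjsigi : eqG n [:: s_ i; s_ j; s_ i; g_ i] [:: s_ j; g_ j; s_ i; s_ j].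
Proof. exact: (eqG_sdV [:: s_ i; s_ j] [::] (sd_1 _ _ hi) eqG_sisjgjsi). Qed.

Let W := [:: g_ j; g_ j.+1; s_ j; s_ i; s_ j].

Let eqG_sigisjgjsi_W : eqG n [:: s_ i; g_ i; s_ j; g_ j; s_ i] W.
Proof.
apply: (eqG_sdV [::] [:: s_ j; g_ j; s_ i] (sd_1 _ _ hi)) => /=.
apply: (eqG_sdV [:: g_ j; s_ i] [:: s_ i] (sd_1 _ _ hj)) => /=.
apply: (eqG_sdV [:: g_ j] [:: s_ j; s_ i] (sd_3 _ _ _ hi hj1 j1_neq_i j1_neq_j)) => /=.
exact: (eqG_braid [:: g_ j; g_ j.+1] [::] (br_adj _ _ _ hi hj ij_adj) (cg_refl _)).
Qed.

Let eqG_sjgjsisjgj_W : eqG n [:: s_ j; g_ j; s_ i; s_ j; g_ j] W.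
Proof.
apply: (eqG_sdV [::] [:: s_ i; s_ j; g_ j] (sd_1 _ _ hj)) => /=.
apply: (eqG_sdV [:: g_ j.+1; s_ j; s_ i] [::] (sd_1 _ _ hj)) => /=.
apply: (eqG_sdV [:: g_ j.+1; s_ j] [:: s_ j] (sd_3 _ _ _ hi hj1 j1_neq_i j1_neq_j)) => /=.
apply: (eqG_sd [::] [:: g_ j.+1; s_ i; s_ j] (sd_1 _ _ hj)) => /=.
apply: (eqG_insert [:: s_ j; g_ j; g_ j.+1] [:: s_ i; s_ j] (ginv_ j) wf_ginv_j) => /=.
apply: (eqG_sdV [::] [:: g_ j; s_ i; s_ j] (sd_2 _ _ hj)) => /=.
exact: (eqG_sdV [:: g_ j] [:: s_ i; s_ j] (sd_1 _ _ hj) (cg_refl _)).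
Qed.

Lemma eqG_sigisjgjsi :
  eqG n [:: s_ i; g_ i; s_ j; g_ j; s_ i] [:: s_ j; g_ j; s_ i; s_ j; g_ j].
Proof. exact: cg_trans eqG_sigisjgjsi_W (cg_sym eqG_sjgjsisjgj_W). Qed.

Lemma eqG_sjsigisjgj :
  eqG n [:: s_ j; s_ i; g_ i; s_ j; g_ j] [:: s_ j; g_ j; s_ i; s_ j; g_ j].
Proof. exact: (eqG_sdV [:: s_ j] [:: s_ j; g_ j] (sd_1 _ _ hi) (cg_refl _)). Qed.

End AdjacentWords.

Section PhiRelations.
Variables (T : comNzRingType) (n : nat).

Section Cancel.
Variables (i : nat) (a b : 'I_n).
Hypotheses (ha : val a = i.-1) (hb : val b = i) (hi : (0 < i <= n.-1)%N).
Let i_gt0 : (0 < i)%N. Proof. by case/andP: hi. Qed.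

Lemma phi_sigmaK : gmat_eqv T (phi n [:: s_ i; Sg i true]) (phi n [::]).
Proof.
move=> F hF k l; rewrite !phi_cons phi_nil (gr_eval_phi_sigma ha hb i_gt0).
rewrite !(gr_eval_phi_sigmaV ha hb i_gt0) !gr_eval_gone /=.
have -> : F [:: s_ i; Sg i true] = F [::].
  exact/hF/(eqG_cancel [::] [::])/cg_refl.
have -> : F [:: s_ i; g_ i; ginv_ i; Sg i true] = F [::].
  apply/hF/(eqG_cancel [:: s_ i] [:: Sg i true]); first by rewrite /=; lia.
  exact/(eqG_cancel [::] [::])/cg_refl.
case: (eqVneq k a) => [->|ka]; [|case: (eqVneq k b) => [->|kb]];
  rewrite ?eqxx ?(ab_neq ha hb i_gt0) ?(ba_neq ha hb i_gt0) //=;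
  by case: (a == l); case: (b == l); ring.
Qed.

Lemma phi_sigmaVK : gmat_eqv T (phi n [:: Sg i true; s_ i]) (phi n [::]).
Proof.
move=> F hF k l; rewrite !phi_cons phi_nil (gr_eval_phi_sigmaV ha hb i_gt0).
rewrite !(gr_eval_phi_sigma ha hb i_gt0) !gr_eval_gone /=.
have -> : F [:: Sg i true; s_ i] = F [::].
  exact/hF/(eqG_cancel [::] [::])/cg_refl.
have -> : F [:: ginv_ i; Sg i true; s_ i; g_ i] = F [::].
  apply/hF/(eqG_cancel [:: ginv_ i] [:: g_ i]) => //=.
  by apply: (eqG_cancel [::] [::]); [rewrite /=; lia | exact: cg_refl].
have -> : F [:: Sg i true; s_ i; g_ i] = F [:: g_ i].
  exact/hF/(eqG_cancel [::] [:: g_ i])/cg_refl.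
case: (eqVneq k a) => [->|ka]; [|case: (eqVneq k b) => [->|kb]];
  rewrite ?eqxx ?(ab_neq ha hb i_gt0) ?(ba_neq ha hb i_gt0) //=;
  by case: (a == l); case: (b == l); ring.
Qed.

End Cancel.

Section Far.
Variables (i j : nat) (ai bi aj bj : 'I_n).
Hypotheses (hai : val ai = i.-1) (hbi : val bi = i).
Hypotheses (haj : val aj = j.-1) (hbj : val bj = j).
Hypotheses (hi : (0 < i <= n.-1)%N) (hj : (0 < j <= n.-1)%N) (ij_far : (i.+1 < j)%N).

Lemma phi_far : gmat_eqv T (phi n [:: s_ i; s_ j]) (phi n [:: s_ j; s_ i]).
Proof.
have i_gt0 : (0 < i)%N by case/andP: hi.
have j_gt0 : (0 < j)%N by case/andP: hj.
have hfar : (i.+1 < j)%N || (j.+1 < i)%N by rewrite ij_far.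
have [d1 d2 d3 d4] : [/\ (ai == aj) = false, (ai == bj) = false,
    (bi == aj) = false & (bi == bj) = false] by split; apply: ord_eqF; lia.
have [d5 d6 d7 d8] : [/\ (aj == ai) = false, (bj == ai) = false,
    (aj == bi) = false & (bj == bi) = false] by split; apply: ord_eqF; lia.
have [hji hji1 hij hij1] : [/\ j != i, j != i.+1, i != j & i != j.+1].
  by split; apply/eqP; lia.
move=> F hF k l.
have e1 : F [:: s_ i; s_ j] = F [:: s_ j; s_ i].
  exact/hF/(eqG_braid [::] [::] (br_far _ _ _ hi hj hfar))/cg_refl.
have e2 : F [:: s_ i; g_ i; s_ j] = F [:: s_ j; s_ i; g_ i].
  apply/hF/(eqG_sd [:: s_ i] [::] (sd_3 _ _ _ hj _ hij hij1)) => /=; first lia.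
  exact/(eqG_braid [::] [:: g_ i] (br_far _ _ _ hi hj hfar))/cg_refl.
have e3 : F [:: s_ i; s_ j; g_ j] = F [:: s_ j; g_ j; s_ i].
  apply/hF/(eqG_braid [::] [:: g_ j] (br_far _ _ _ hi hj hfar))/cg_sym => /=.
  apply: (eqG_sd [:: s_ j] [::] (sd_3 _ _ _ hi _ hji hji1)) => /=; first lia.
  exact: cg_refl.
case: (eqVneq k ai) => [->|kai]; [|case: (eqVneq k bi) => [->|kbi]; [|
  case: (eqVneq k aj) => [->|kaj]; [|case: (eqVneq k bj) => [->|kbj]]]];
  rewrite !phi_cons phi_nil;
  do 2 rewrite ?(gr_eval_phi_sigma hai hbi i_gt0) ?(gr_eval_phi_sigma haj hbj j_gt0);
  rewrite !gr_eval_gone /= ?eqxx ?d1 ?d2 ?d3 ?d4 ?d5 ?d6 ?d7 ?d8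
    ?(ab_neq hai hbi i_gt0) ?(ba_neq hai hbi i_gt0)
    ?(ab_neq haj hbj j_gt0) ?(ba_neq haj hbj j_gt0) /=;
  rewrite ?(negbTE kai) ?(negbTE kbi) ?(negbTE kaj) ?(negbTE kbj) ?e1 ?e2 ?e3;
  ring.
Qed.

End Far.

Section Adjacent.
Variables (i : nat) (a b c : 'I_n).
Hypotheses (ha : val a = i.-1) (hb : val b = i) (hc : val c = i.+1).
Hypotheses (hi : (0 < i <= n.-1)%N) (hj : (0 < i.+1 <= n.-1)%N).

Lemma phi_adj :
  gmat_eqv T (phi n [:: s_ i; s_ i.+1; s_ i]) (phi n [:: s_ i.+1; s_ i; s_ i.+1]).
Proof.
have i_gt0 : (0 < i)%N by case/andP: hi.
have rowI := gr_eval_phi_sigma ha hb i_gt0.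
have rowJ := @gr_eval_phi_sigma n i.+1 b c hb hc isT.
have [d1 d2 d3 d4] : [/\ (a == c) = false, (c == a) = false,
    (b == c) = false & (c == b) = false] by split; apply: ord_eqF; lia.
have [d5 d6] : (a == b) = false /\ (b == a) = false by split; apply: ord_eqF; lia.
move=> F hF k l.
have e1 := hF _ _ (eqG_sisjsi hi hj).
have e2 := hF _ _ (eqG_sisjsigi hi hj).
have e3 := hF _ _ (eqG_sisjgjsi hi hj).
have e4 := hF _ _ (eqG_sigisjgjsi hi hj).
have e5 := hF _ _ (eqG_sjsigisjgj hi).
case: (eqVneq k a) => [->|ka]; [|case: (eqVneq k b) => [->|kb]; [|
  case: (eqVneq k c) => [->|kc]]];
  rewrite !phi_cons phi_nil; do 3 rewrite ?rowI ?rowJ;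
  rewrite !gr_eval_gone /= ?eqxx ?d1 ?d2 ?d3 ?d4 ?d5 ?d6 /=;
  rewrite ?(negbTE ka) ?(negbTE kb) ?(negbTE kc) ?e1 ?e2 ?e3 ?e4 ?e5;
  ring.
Qed.

End Adjacent.

Lemma braid_rel_phi u v : braid_rel n u v -> gmat_eqv T (phi n u) (phi n v).
Proof.
case=> i j hi hj.
- have [oi1 oi oj1 oj] : [/\ i.-1 < n, i < n, j.-1 < n & j < n]%N by split; lia.
  case/orP => hij; last apply: gmat_eqv_sym.
  + exact: (@phi_far i j (Ordinal oi1) (Ordinal oi) (Ordinal oj1) (Ordinal oj)).
  + exact: (@phi_far j i (Ordinal oj1) (Ordinal oj) (Ordinal oi1) (Ordinal oi)).
- case/orP => /eqP E; subst; last apply: gmat_eqv_sym.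
  + have [o1 o2 o3] : [/\ i.-1 < n, i < n & i.+1 < n]%N by split; lia.
    exact: (@phi_adj i (Ordinal o1) (Ordinal o2) (Ordinal o3)).
  + have [o1 o2 o3] : [/\ j.-1 < n, j < n & j.+1 < n]%N by split; lia.
    exact: (@phi_adj j (Ordinal o1) (Ordinal o2) (Ordinal o3)).
Qed.

Lemma phi_cancel i b : (0 < i <= n.-1)%N ->
  gmat_eqv T (phi n [:: Sg i b; Sg i (~~ b)]) (phi n [::]).
Proof.
move=> hi; have [o1 o2] : (i.-1 < n /\ i < n)%N by split; lia.
case: b; [exact: (@phi_sigmaVK i (Ordinal o1) (Ordinal o2)) |
          exact: (@phi_sigmaK i (Ordinal o1) (Ordinal o2))].
Qed.

Lemma eqB_phi u v : eqB n u v -> gmat_eqv T (phi n u) (phi n v).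
Proof. by apply: eqB_gmat_eqv; [exact: braid_rel_phi | exact: phi_cancel]. Qed.

End PhiRelations.

Lemma gr_eval_entry (C : nzRingType) d (F : word -> 'M[C]_d) x r s :
  gr_eval F x r s = gr_eval (fun w => F w r s) x.
Proof.
by rewrite /gr_eval summxE; apply: eq_bigr => p _; rewrite -scaler_int mxE mulrzl.
Qed.

Section RhoPlus.
Variables (C : comNzRingType) (n d : nat) (rho : word -> 'M[C]_d).
Hypothesis rho_rep : is_rep_FP n d rho.

Definition rho_pure (w : word) : 'M[C]_d := if pure n w then rho w else 0.

Lemma ext_gr_eval x : ext n d rho x = gr_eval rho_pure x.
Proof.
rewrite /ext /gr_eval big_mkcond; apply: eq_bigr => p _; rewrite /rho_pure.
by case: ifP; rewrite ?scaler_int ?mul0rz.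
Qed.

Definition completes (f : nat -> nat) (c : word) :=
  braid_word n c /\ forall k, (0 < k <= n)%N -> f (perm_of c k) = k.

(* A non-pure [w] is sent to [rho (w ++ c)] for a braid word [c] chosen from
   the permutation of [w] alone, so that [rho_all] is [eqG]-invariant. *)
Definition rho_all (w : word) : 'M[C]_d :=
  if wf n w then
    if pure n w then rho w
    else if pselect (exists c, completes (perm_of w) c) is left h
         then rho (w ++ sval (cid h)) else 0
  else 0.

Lemma rho_all_invariant u v : eqG n u v -> rho_all u = rho_all v.
Proof.
case: rho_rep => [_ [_ rho_eq]] huv.
have e := eqG_perm huv.
rewrite /rho_all (eqG_wf huv); case hv: (wf n v) => //.
have hu : wf n u by rewrite (eqG_wf huv).
rewrite (eq_pure n e); case pv: (pure n v); first by apply: rho_eq; rewrite ?(eq_pure n e).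
rewrite (funext e); case: pselect => // h.
have [/andP[hcw _] hcp] := svalP (cid h).
have pure_cat_c w : perm_of w =1 perm_of v -> pure n (w ++ sval (cid h)).
  by move=> ew; apply/allP => k; rewrite mem_iota perm_of_cat ew => hk; rewrite hcp //; lia.
apply: rho_eq; rewrite ?wf_cat ?hu ?hv ?hcw ?pure_cat_c //.
exact: cong_catr.
Qed.

Lemma mem_phi_pure u k l p : braid_word n u -> pure n u -> p \in phi n u k l ->
  wf n p.2 /\ pure n p.2.
Proof.
move=> /andP[hw _] hp /mem_phi [hperm hwf].
by split; [exact: hwf | rewrite (eq_pure n hperm)].
Qed.

Lemma gr_eval_phi_pure u k l : braid_word n u -> pure n u ->
  gr_eval rho_pure (phi n u k l) = gr_eval rho_all (phi n u k l).
Proof.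
move=> hu pu; apply: eq_big_seq => p /(mem_phi_pure hu pu) [hw hp].
by rewrite /rho_pure /rho_all hw hp.
Qed.

Lemma rho_plus1 : rho_plus n d rho [::] = 1%:M.
Proof.
case: rho_rep => [rho1 _].
rewrite -(mxdiagZ (p_ := fun _ : 'I_n => d)) /mxdiag /rho_plus /=.
apply: eq_mxblock => k l; rewrite /gone; case: eqP => _.
  by rewrite conform_mx_id /ext big_cons big_nil /= pure_nil rho1 addr0 scale1r.
by rewrite /ext big_nil.
Qed.

Lemma rho_plusM u v : braid_word n u -> braid_word n v -> pure n u -> pure n v ->
  rho_plus n d rho (u ++ v) = rho_plus n d rho u *m rho_plus n d rho v.
Proof.
case: rho_rep => [_ [rhoM _]] hu hv pu pv.
rewrite /rho_plus mul_mxblock; apply: eq_mxblock => k l.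
rewrite ext_gr_eval gr_eval_phi_cat; apply: eq_bigr => m _.
rewrite !ext_gr_eval /gr_eval mulmx_suml; apply: eq_big_seq => p hp.
have [hpw hpp] := mem_phi_pure hu pu hp.
rewrite -!scaler_int -scalemxAl mulmx_sumr; congr (_ *: _).
apply: eq_big_seq => q hq; have [hqw hqp] := mem_phi_pure hv pv hq.
by rewrite /rho_pure hpp hqp pure_cat // rhoM // -!scaler_int scalemxAr.
Qed.

Lemma rho_plus_eqB u v : braid_word n u -> braid_word n v -> pure n u -> pure n v ->
  eqB n u v -> rho_plus n d rho u = rho_plus n d rho v.
Proof.
move=> hu hv pu pv huv; apply: eq_mxblock => k l.
rewrite !ext_gr_eval (gr_eval_phi_pure _ _ hu pu) (gr_eval_phi_pure _ _ hv pv).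
apply/matrixP => r s; rewrite !gr_eval_entry.
by apply: (eqB_phi huv (F := fun w => rho_all w r s)) => u' v' /rho_all_invariant ->.
Qed.

Lemma rho_plus_rep : is_rep_P n (\sum_(k < n) d) (rho_plus n d rho).
Proof. by split; [exact: rho_plus1 | split; [exact: rho_plusM | exact: rho_plus_eqB]]. Qed.

End RhoPlus.

Local Open Scope complex_scope.

Theorem theorem4p1 (R : realType) (n d : nat) (rho : word -> 'M[R[i]]_d)
  (t : nat -> R[i]) :
  (2 <= n)%N -> is_rep_FP n d rho ->
  (forall i, (1 <= i <= n)%N -> t i != 0) ->
  (exists rho_t, twisted n d rho t rho_t) /\
  (forall b, braid_word n b -> pure n b ->
     forall k l : 'I_n, in_ZFP n (phi n b k l)) /\
  (forall rho_t, twisted n d rho t rho_t ->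
     is_rep_P n (\sum_(k < n) d) (rho_plus n d rho_t)).
Proof.
move=> _ rho_rep t_neq0; split; first by exists (rho_twist n t rho); exact: rho_twist_twisted.
split; first by move=> b _ pb k l; exact: phi_in_ZFP.
by move=> rho_t [rho_t_rep _]; exact: rho_plus_rep.
Qed.
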